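(* Let $Z$ be a hyperimmune set. Then there is a $1$-generic set $G\leq_T Z\oplus 0'$ such that $Z\subseteq G$.
   Context: An infinite set $Z$ is hyperimmune if for every computable increasing function $f$ there is an $n$ such that $[f(n),f(n+1))\cap Z=\emptyset$. A set $G$ (identified with its characteristic sequence in $2^\omega$) is $1$-generic if for every c.e. set $S$ of finite binary strings, either some initial segment of $G$ lies in $S$, or some initial segment of $G$ has no extension in $S$. *)

(* A self-contained model of (oracle) computability:
   unary mu-recursive functions over nat with Cantor pairing and an
   oracle-query primitive.  Sets of naturals are predicates nat -> Prop. *)
From Stdlib Require Import Arith List.
Import ListNotations.

Definition cpair (x y : nat) : nat := (x + y) * (x + y + 1) / 2 + y.

Inductive code : Type :=
| cZero : code
| cSucc : code
| cPi1 : code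
| cPi2 : code
| cOracle : code
| cComp : code -> code -> code
| cPair : code -> code -> code
| cRec : code -> code -> code  (* h<x,0> = f x ; h<x,n+1> = g<x,<n,h<x,n>>> *)
| cMin : code -> code.

Inductive eval (A : nat -> Prop) : code -> nat -> nat -> Prop :=
| e_zero x : eval A cZero x 0
| e_succ x : eval A cSucc x (S x)
| e_pi1 x y : eval A cPi1 (cpair x y) x
| e_pi2 x y : eval A cPi2 (cpair x y) y
| e_orc1 x : A x -> eval A cOracle x 1
| e_orc0 x : ~ A x -> eval A cOracle x 0
| e_comp f g x y z : eval A g x y -> eval A f y z -> eval A (cComp f g) x z
| e_pair f g x y z : eval A f x y -> eval A g x z -> eval A (cPair f g) x (cpair y z)
| e_rec0 f g x y : eval A f x y -> eval A (cRec f g) (cpair x 0) y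
| e_recS f g x n y z :
    eval A (cRec f g) (cpair x n) y ->
    eval A g (cpair x (cpair n y)) z ->
    eval A (cRec f g) (cpair x (S n)) z
| e_min f x y :
    eval A f (cpair x y) 0 ->
    (forall k, k < y -> exists v, v <> 0 /\ eval A f (cpair x k) v) ->
    eval A (cMin f) x y.

(** The empty oracle (unrelativized computation). *)
Definition empty_set : nat -> Prop := fun _ => False.

Fixpoint code_num (c : code) : nat :=
  match c with
  | cZero => cpair 0 0
  | cSucc => cpair 1 0
  | cPi1 => cpair 2 0
  | cPi2 => cpair 3 0
  | cOracle => cpair 4 0
  | cComp f g => cpair 5 (cpair (code_num f) (code_num g))
  | cPair f g => cpair 6 (cpair (code_num f) (code_num g))
  | cRec f g => cpair 7 (cpair (code_num f) (code_num g))
  | cMin f => cpair 8 (code_num f)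
  end.

Definition jump0 : nat -> Prop :=
  fun e => exists c, code_num c = e /\ exists v, eval empty_set c e v.

Definition join (A B : nat -> Prop) : nat -> Prop :=
  fun n => (exists k, n = 2 * k /\ A k) \/ (exists k, n = 2 * k + 1 /\ B k).

Definition turing_le (X A : nat -> Prop) : Prop :=
  exists c, forall n, (X n -> eval A c n 1) /\ (~ X n -> eval A c n 0).

Definition computable_fun (f : nat -> nat) : Prop :=
  exists c, forall n, eval empty_set c n (f n).

Definition increasing (f : nat -> nat) : Prop := forall n, f n < f (S n).

Definition infinite_set (Z : nat -> Prop) : Prop :=
  forall m, exists n, m <= n /\ Z n.

Definition hyperimmune (Z : nat -> Prop) : Prop :=
  infinite_set Z /\
  forall f, computable_fun f -> increasing f ->
    exists n, forall m, f n <= m -> m < f (S n) -> ~ Z m.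

Fixpoint str_num (s : list bool) : nat :=
  match s with
  | [] => 0
  | b :: t => 2 * str_num t + (if b then 2 else 1)
  end.

Definition ce_strings (S : list bool -> Prop) : Prop :=
  exists c, forall s, S s <-> exists v, eval empty_set c (str_num s) v.

Definition init_seg (G : nat -> Prop) (s : list bool) : Prop :=
  forall i, i < length s -> (nth i s false = true <-> G i).

Definition extends (t s : list bool) : Prop := exists r, t = s ++ r.

Definition one_generic (G : nat -> Prop) : Prop :=
  forall S, ce_strings S ->
    (exists s, init_seg G s /\ S s) \/
    (exists s, init_seg G s /\ forall t, S t -> ~ extends t s).

From Stdlib Require Import Arith Lia List Classical ClassicalEpsilon.
Import ListNotations.

(** G is the limit of finite strings [stage Z 0 ⊆ stage Z 1 ⊆ ...].  At stage [e], for
    the [e]-th program viewed as a search for extensions in a c.e. set of strings [S],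
    extend the current string [s] by [k] ones, for the least [k] such that either [s 1^k]
    has no extension in [S], or the extension found has a [1] at every position of [Z] it
    covers; take that extension (or [s 1^k]) and append a [1].  Such a [k] exists: otherwise
    every extension misses some element of [Z], and searching successively from [s 1^k]
    with [k] just past the previous extension yields a computable increasing function all of
    whose intervals meet [Z], against hyperimmunity.  So [Z ⊆ G], every [S] is met or
    avoided, and each stage needs only [Z] and the halting problem.  The computability
    claims are witnessed by explicit programs of the model, using a clocked interpreter to
    turn halting of an extension search into a single unbounded search. *)

(** * Cantor pairing *)

Definition triangle (n : nat) : nat := n * (n + 1) / 2.

Lemma triangle_succ n : triangle (S n) = triangle n + S n.
Proof.
  unfold triangle.
  replace (S n * (S n + 1)) with (n * (n + 1) + S n * 2) by nia.
  now rewrite Nat.div_add by lia.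
Qed.

Lemma triangle_mono a b : a <= b -> triangle a <= triangle b.
Proof. induction 1; [lia|]. rewrite triangle_succ. lia. Qed.

Lemma cpair_triangle x y : cpair x y = triangle (x + y) + y.
Proof. reflexivity. Qed.

Lemma cpair_inj x y x' y' : cpair x y = cpair x' y' -> x = x' /\ y = y'.
Proof.
  rewrite !cpair_triangle. intros H.
  assert (Hsum : x + y = x' + y').
  { destruct (lt_eq_lt_dec (x + y) (x' + y')) as [[h|h]|h]; [| exact h |].
    - pose proof (triangle_mono _ _ h). rewrite triangle_succ in *. lia.
    - pose proof (triangle_mono _ _ h). rewrite triangle_succ in *. lia. }
  rewrite Hsum in H. lia.
Qed.

Fixpoint unpair (n : nat) : nat * nat :=
  match n with
  | 0 => (0, 0)
  | S n =>
      let (x, y) := unpair n in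
      match x with 0 => (S y, 0) | S x' => (x', S y) end
  end.

Definition pi1 n := fst (unpair n).
Definition pi2 n := snd (unpair n).

Lemma cpair_pi n : cpair (pi1 n) (pi2 n) = n.
Proof.
  unfold pi1, pi2. induction n as [|n IH]; [reflexivity|].
  simpl. destruct (unpair n) as [x y]. rewrite cpair_triangle in *. simpl in *.
  destruct x; simpl.
  - rewrite !Nat.add_0_r, triangle_succ. simpl in IH. lia.
  - rewrite <- IH. replace (x + S y) with (S x + y) by lia. lia.
Qed.

Lemma pi1_cpair x y : pi1 (cpair x y) = x.
Proof. now destruct (cpair_inj _ _ _ _ (cpair_pi (cpair x y))). Qed.

Lemma pi2_cpair x y : pi2 (cpair x y) = y.
Proof. now destruct (cpair_inj _ _ _ _ (cpair_pi (cpair x y))). Qed.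

Global Opaque cpair.

Ltac simpl_pi := repeat rewrite ?pi1_cpair, ?pi2_cpair in *.

Ltac inj_cpair := repeat match goal with
  | h : cpair _ _ = cpair _ _ |- _ => apply cpair_inj in h as [? ?]; subst
  end.

(** * Determinism of evaluation *)

(** The generated induction principle gives no hypothesis for the
    nonzero values below a minimization witness. *)
Lemma eval_ind_strong (A : nat -> Prop) (P : code -> nat -> nat -> Prop)
  (Pzero : forall x, P cZero x 0)
  (Psucc : forall x, P cSucc x (S x))
  (Ppi1 : forall x y, P cPi1 (cpair x y) x)
  (Ppi2 : forall x y, P cPi2 (cpair x y) y)
  (Porc1 : forall x, A x -> P cOracle x 1)
  (Porc0 : forall x, ~ A x -> P cOracle x 0)
  (Pcomp : forall f g x y z, eval A g x y -> P g x y -> eval A f y z -> P f y z ->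
     P (cComp f g) x z)
  (Ppair : forall f g x y z, eval A f x y -> P f x y -> eval A g x z -> P g x z ->
     P (cPair f g) x (cpair y z))
  (Prec0 : forall f g x y, eval A f x y -> P f x y -> P (cRec f g) (cpair x 0) y)
  (PrecS : forall f g x n y z,
     eval A (cRec f g) (cpair x n) y -> P (cRec f g) (cpair x n) y ->
     eval A g (cpair x (cpair n y)) z -> P g (cpair x (cpair n y)) z ->
     P (cRec f g) (cpair x (S n)) z)
  (Pmin : forall f x y, eval A f (cpair x y) 0 -> P f (cpair x y) 0 ->
     (forall k, k < y -> exists v, v <> 0 /\ eval A f (cpair x k) v /\ P f (cpair x k) v) ->
     P (cMin f) x y) :
  forall c x v, eval A c x v -> P c x v.
Proof.
  fix IH 4. intros c x v H.
  destruct H as [| | | |x a|x a|f g x y z e1 e2|f g x y z e1 e2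
                |f g x y e1|f g x n y z e1 e2|f x y e1 hk]; eauto.
  apply Pmin; auto. intros k h. destruct (hk k h) as [w [hw he]]. eauto.
Qed.

Lemma eval_functional A c x v : eval A c x v -> forall w, eval A c x w -> v = w.
Proof.
  revert c x v.
  apply (eval_ind_strong A (fun c x v => forall w, eval A c x w -> v = w));
    [ intros x w h | intros x w h | intros x y w h | intros x y w h
    | intros x a w h | intros x a w h
    | intros f g x y z _ IHg _ IHf w h | intros f g x y z _ IHf _ IHg w h
    | intros f g x y _ IHf w h | intros f g x n y z _ IHr _ IHg w h
    | intros f x y _ IHf Hbelow w h ];
    inversion h; subst; inj_cpair; auto; try tauto; try discriminate.
  - match goal with e : eval A g x _ |- _ => apply IHg in e; subst end. auto.
  - match goal with e : S _ = S _ |- _ => injection e as -> end.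
    match goal with e : eval A (cRec f g) _ _ |- _ => apply IHr in e; subst end. auto.
  - destruct (lt_eq_lt_dec y w) as [[l|l]|l]; auto.
    + match goal with Hb : forall k, k < w -> _ |- _ => destruct (Hb y l) as [u [hu he]] end.
      apply IHf in he. lia.
    + destruct (Hbelow w l) as [u [hu [_ hp]]].
      match goal with e : eval A f (cpair x w) 0 |- _ => apply hp in e end. lia.
Qed.

(** * A library of programs *)

Lemma eval_eq_value A c x v w : eval A c x v -> v = w -> eval A c x w.
Proof. now intros ? <-. Qed.

Lemma eval_pi1 A x : eval A cPi1 x (pi1 x).
Proof. rewrite <- (cpair_pi x) at 1. constructor. Qed.

Lemma eval_pi2 A x : eval A cPi2 x (pi2 x).
Proof. rewrite <- (cpair_pi x) at 1. constructor. Qed.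

Definition cId := cPair cPi1 cPi2.

Lemma eval_cId A x : eval A cId x x.
Proof. eapply eval_eq_value; [apply e_pair; [apply eval_pi1|apply eval_pi2]|apply cpair_pi]. Qed.

Fixpoint cConst (n : nat) : code :=
  match n with 0 => cZero | S n => cComp cSucc (cConst n) end.

Lemma eval_cConst A n x : eval A (cConst n) x n.
Proof. induction n; simpl; econstructor; eauto using e_succ. Qed.

Lemma cConst_value A n x y : eval A (cConst n) x y -> y = n.
Proof. intros h. exact (eval_functional _ _ _ _ h _ (eval_cConst A n x)). Qed.

Create HintDb eval_progs.
#[export] Hint Resolve eval_pi1 eval_pi2 e_zero e_succ eval_cId eval_cConst : eval_progs.

(** Only syntactic compositions and pairings are split, so named programs are
    handled by their specification lemmas. *)
Ltac eval_steps :=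
  repeat first
    [ solve [eauto 1 with eval_progs]
    | match goal with
      | |- eval _ (cComp _ _) _ _ => eapply e_comp
      | |- eval _ (cPair _ _) _ _ => eapply e_pair
      end ].

Definition rec_iter (F G : nat -> nat) (x n : nat) : nat :=
  nat_rect (fun _ => nat) (F x) (fun i r => G (cpair x (cpair i r))) n.

Ltac simpl_rec := unfold rec_iter in *; cbn [nat_rect] in *; simpl_pi.

Section Recursion.

Variables (A : nat -> Prop) (f g : code) (F G : nat -> nat).
Hypothesis (Hf : forall x, eval A f x (F x)) (Hg : forall z, eval A g z (G z)).

Lemma eval_cRec_cpair x n : eval A (cRec f g) (cpair x n) (rec_iter F G x n).
Proof. induction n; simpl; econstructor; eauto. Qed.

Lemma eval_cRec z : eval A (cRec f g) z (rec_iter F G (pi1 z) (pi2 z)).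
Proof. rewrite <- (cpair_pi z) at 1. apply eval_cRec_cpair. Qed.

Definition cRecOn := cComp (cRec f g) (cPair cZero cId).

Lemma eval_cRecOn n : eval A cRecOn n (rec_iter F G 0 n).
Proof. econstructor; [eval_steps|apply eval_cRec_cpair]. Qed.

End Recursion.

Definition cAdd := cRec cId (cComp cSucc (cComp cPi2 cPi2)).

Lemma eval_cAdd A z : eval A cAdd z (pi1 z + pi2 z).
Proof.
  eapply eval_eq_value.
  - apply eval_cRec with (F := fun x => x) (G := fun w => S (pi2 (pi2 w))); intros; eval_steps.
  - generalize (pi1 z) (pi2 z). intros x n. induction n; simpl_rec; lia.
Qed.
#[export] Hint Resolve eval_cAdd : eval_progs.

Definition cMul := cRec cZero (cComp cAdd (cPair (cComp cPi2 cPi2) cPi1)).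

Lemma eval_cMul A z : eval A cMul z (pi1 z * pi2 z).
Proof.
  eapply eval_eq_value.
  - apply eval_cRec with (F := fun x => 0) (G := fun w => pi2 (pi2 w) + pi1 w);
      intros; eapply eval_eq_value; eval_steps; now simpl_pi.
  - generalize (pi1 z) (pi2 z). intros x n. induction n; simpl_rec; lia.
Qed.
#[export] Hint Resolve eval_cMul : eval_progs.

Definition cPred := cRecOn cZero (cComp cPi1 cPi2).

Lemma eval_cPred A z : eval A cPred z (pred z).
Proof.
  eapply eval_eq_value.
  - apply eval_cRecOn with (F := fun _ => 0) (G := fun w => pi1 (pi2 w)); intros; eval_steps.
  - destruct z; simpl_rec; auto.
Qed.
#[export] Hint Resolve eval_cPred : eval_progs.

Definition cSub := cRec cId (cComp cPred (cComp cPi2 cPi2)).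

Lemma eval_cSub A z : eval A cSub z (pi1 z - pi2 z).
Proof.
  eapply eval_eq_value.
  - apply eval_cRec with (F := fun x => x) (G := fun w => pred (pi2 (pi2 w))); intros; eval_steps.
  - generalize (pi1 z) (pi2 z). intros x n. induction n; simpl_rec; lia.
Qed.
#[export] Hint Resolve eval_cSub : eval_progs.

Definition cSgn := cRecOn cZero (cConst 1).

Lemma eval_cSgn A z : eval A cSgn z (min 1 z).
Proof.
  eapply eval_eq_value.
  - apply eval_cRecOn with (F := fun _ => 0) (G := fun _ => 1); intros; eval_steps.
  - destruct z; reflexivity.
Qed.
#[export] Hint Resolve eval_cSgn : eval_progs.

Definition cNot := cComp cSub (cPair (cConst 1) cId).

Lemma eval_cNot A z : eval A cNot z (1 - z).
Proof. unfold cNot. eapply eval_eq_value; [eval_steps|now simpl_pi]. Qed.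
#[export] Hint Resolve eval_cNot : eval_progs.

(** [cIfZero f g] runs [f] on [u] for input [<u, 0>] and [g] on [<u, n>] for input [<u, S n>]. *)
Definition cIfZero f g := cRec f (cComp g (cPair cPi1 (cComp cPi1 cPi2))).

Lemma eval_cIfZero_0 A f g u w : eval A f u w -> eval A (cIfZero f g) (cpair u 0) w.
Proof. intros; now constructor. Qed.

Lemma eval_cIfZero_1 A f g u y w :
  eval A f u y -> eval A g (cpair u 0) w -> eval A (cIfZero f g) (cpair u 1) w.
Proof.
  intros hf hg. eapply e_recS with (y := y); [now constructor|].
  econstructor; [eval_steps|]. now simpl_pi.
Qed.

Lemma eval_cIfZero A f g F G :
  (forall x, eval A f x (F x)) -> (forall z, eval A g z (G z)) ->
  forall z, eval A (cIfZero f g) z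
    (match pi2 z with 0 => F (pi1 z) | S n => G (cpair (pi1 z) n) end).
Proof.
  intros hf hg z. eapply eval_eq_value.
  - apply eval_cRec with (F := F) (G := fun w => G (cpair (pi1 w) (pi1 (pi2 w)))); auto.
    intros. econstructor; [eval_steps|apply hg].
  - destruct (pi2 z); simpl_rec; auto.
Qed.

Definition cPow2 := cRecOn (cConst 1) (cComp cAdd (cPair (cComp cPi2 cPi2) (cComp cPi2 cPi2))).

Lemma eval_cPow2 A z : eval A cPow2 z (2 ^ z).
Proof.
  eapply eval_eq_value.
  - apply eval_cRecOn with (F := fun _ => 1) (G := fun w => pi2 (pi2 w) + pi2 (pi2 w));
      intros; eapply eval_eq_value; eval_steps; now simpl_pi.
  - induction z; simpl_rec; simpl; lia.
Qed.
#[export] Hint Resolve eval_cPow2 : eval_progs.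

(** Ceiling of [z/2], by the recursion [c (n+1) = (n+1) - c n]. *)
Definition cCeilHalf :=
  cRecOn cZero (cComp cSub (cPair (cComp cSucc (cComp cPi1 cPi2)) (cComp cPi2 cPi2))).

Lemma eval_cCeilHalf A z : eval A cCeilHalf z (z - z / 2).
Proof.
  eapply eval_eq_value.
  - apply eval_cRecOn with (F := fun _ => 0) (G := fun w => S (pi1 (pi2 w)) - pi2 (pi2 w));
      intros; eapply eval_eq_value; eval_steps; now simpl_pi.
  - induction z; simpl_rec; [reflexivity|]. rewrite IHz.
    pose proof (Nat.div_mod z 2 ltac:(lia)). pose proof (Nat.div_mod (S z) 2 ltac:(lia)).
    pose proof (Nat.mod_upper_bound z 2 ltac:(lia)). pose proof (Nat.mod_upper_bound (S z) 2 ltac:(lia)).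
    lia.
Qed.
#[export] Hint Resolve eval_cCeilHalf : eval_progs.

Definition cHalf := cComp cSub (cPair cId cCeilHalf).

Lemma eval_cHalf A z : eval A cHalf z (z / 2).
Proof.
  unfold cHalf.
  eapply eval_eq_value; [eval_steps|]. simpl_pi.
  pose proof (Nat.div_mod z 2). lia.
Qed.
#[export] Hint Resolve eval_cHalf : eval_progs.

Definition cMod2 := cComp cSub (cPair cId (cComp cAdd (cPair cHalf cHalf))).

Lemma eval_cMod2 A z : eval A cMod2 z (z mod 2).
Proof.
  unfold cMod2.
  eapply eval_eq_value; [eval_steps|]. simpl_pi.
  pose proof (Nat.div_mod z 2). lia.
Qed.
#[export] Hint Resolve eval_cMod2 : eval_progs.

(** * Arithmetic of string numbers *)

Definition str_tail (n : nat) : nat := pred n / 2.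

(** [1] encodes [true] and also the empty string, so bits past the end read as [true]. *)
Definition str_head (n : nat) : nat := 1 - min 1 n * (n mod 2).

Definition str_bit (n j : nat) : nat := str_head (Nat.iter j str_tail n).

Lemma str_num_app s t : str_num (s ++ t) = str_num s + 2 ^ length s * str_num t.
Proof. induction s as [|b s IH]; simpl; [lia|]. rewrite IH. destruct b; lia. Qed.

Lemma length_le_str_num s : length s <= str_num s.
Proof. induction s as [|b s IH]; simpl; destruct_all bool; lia. Qed.

Lemma str_tail_cons b t : str_tail (str_num (b :: t)) = str_num t.
Proof.
  unfold str_tail; cbn [str_num].
  replace (pred (2 * str_num t + (if b then 2 else 1))) with ((if b then 1 else 0) + str_num t * 2)
    by (destruct b; lia).
  rewrite Nat.div_add by lia. now destruct b.
Qed.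

Lemma str_head_cons b t : str_head (str_num (b :: t)) = if b then 1 else 0.
Proof.
  unfold str_head; cbn [str_num]. destruct b.
  - replace (2 * str_num t + 2) with (0 + (str_num t + 1) * 2) by lia.
    rewrite Nat.Div0.mod_add. change (0 mod 2) with 0. lia.
  - replace (2 * str_num t + 1) with (1 + str_num t * 2) by lia.
    rewrite Nat.Div0.mod_add. change (1 mod 2) with 1. lia.
Qed.

Lemma iter_str_tail_0 j : Nat.iter j str_tail 0 = 0.
Proof. induction j; simpl; [|rewrite IHj]; reflexivity. Qed.

Lemma iter_succ_r {X} j (f : X -> X) x : Nat.iter (S j) f x = Nat.iter j f (f x).
Proof. induction j; simpl in *; congruence. Qed.

Lemma iter_str_tail s j : Nat.iter j str_tail (str_num s) = str_num (skipn j s).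
Proof.
  revert s; induction j; intros s; [reflexivity|].
  rewrite iter_succ_r. destruct s as [|b s].
  - simpl. rewrite iter_str_tail_0. now destruct j.
  - rewrite str_tail_cons. apply IHj.
Qed.

Lemma str_bit_str_num s j : str_bit (str_num s) j = if nth j s true then 1 else 0.
Proof.
  unfold str_bit. rewrite iter_str_tail.
  destruct (Nat.lt_ge_cases j (length s)) as [h|h].
  - rewrite <- (firstn_skipn j s) at 2. rewrite app_nth2; rewrite length_firstn; [|lia].
    replace (j - min j (length s)) with 0 by lia.
    destruct (skipn j s) as [|b t] eqn:E.
    + apply (f_equal (@length bool)) in E. rewrite length_skipn in E. simpl in E. lia.
    + apply str_head_cons.
  - rewrite skipn_all2, nth_overflow by lia. reflexivity.
Qed.

Fixpoint num_str_fuel (k n : nat) : list bool :=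
  match k, n with
  | 0, _ | _, 0 => []
  | S k, S m => negb (Nat.even m) :: num_str_fuel k (m / 2)
  end.

Definition num_str (n : nat) : list bool := num_str_fuel n n.

Lemma str_num_num_str_fuel k n : n <= k -> str_num (num_str_fuel k n) = n.
Proof.
  revert n; induction k; intros n h; simpl; [lia|].
  destruct n as [|m]; [reflexivity|].
  change (2 * str_num (num_str_fuel k (m / 2)) + (if negb (Nat.even m) then 2 else 1) = S m).
  assert (m / 2 <= k) by (pose proof (Nat.div_mod m 2); lia).
  rewrite IHk by auto.
  destruct (Nat.Even_or_Odd m) as [[q ->]|[q ->]].
  - replace (Nat.even (2 * q)) with true
      by (now rewrite <- (Nat.add_0_l (2 * q)), Nat.even_add_mul_2).
    rewrite (Nat.mul_comm 2 q), Nat.div_mul by lia. cbn [negb]. lia.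
  - replace (Nat.even (2 * q + 1)) with false
      by (now rewrite Nat.add_comm, Nat.even_add_mul_2).
    replace (2 * q + 1) with (1 + q * 2) by lia. rewrite Nat.div_add by lia. cbn [negb].
    change (1 / 2) with 0. lia.
Qed.

Lemma str_num_num_str n : str_num (num_str n) = n.
Proof. now apply str_num_num_str_fuel. Qed.

Definition cFstFst := cComp cPi1 cPi1.
Definition cSndFst := cComp cPi2 cPi1.
Definition cFstSnd := cComp cPi1 cPi2.
Definition cSndSnd := cComp cPi2 cPi2.

Lemma eval_cFstFst A x : eval A cFstFst x (pi1 (pi1 x)).
Proof. unfold cFstFst. eval_steps. Qed.
Lemma eval_cSndFst A x : eval A cSndFst x (pi2 (pi1 x)).
Proof. unfold cSndFst. eval_steps. Qed.
Lemma eval_cFstSnd A x : eval A cFstSnd x (pi1 (pi2 x)).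
Proof. unfold cFstSnd. eval_steps. Qed.
Lemma eval_cSndSnd A x : eval A cSndSnd x (pi2 (pi2 x)).
Proof. unfold cSndSnd. eval_steps. Qed.
#[export] Hint Resolve eval_cFstFst eval_cSndFst eval_cFstSnd eval_cSndSnd : eval_progs.

Definition cStrTail := cComp cHalf cPred.

Lemma eval_cStrTail A z : eval A cStrTail z (str_tail z).
Proof. unfold cStrTail. eval_steps. Qed.
#[export] Hint Resolve eval_cStrTail : eval_progs.

Definition cStrHead := cComp cNot (cComp cMul (cPair cSgn cMod2)).

Lemma eval_cStrHead A z : eval A cStrHead z (str_head z).
Proof. unfold cStrHead. eapply eval_eq_value; [eval_steps|now simpl_pi]. Qed.
#[export] Hint Resolve eval_cStrHead : eval_progs.

Definition cIterStrTail := cRec cId (cComp cStrTail cSndSnd).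

Lemma eval_cIterStrTail A z : eval A cIterStrTail z (Nat.iter (pi2 z) str_tail (pi1 z)).
Proof.
  eapply eval_eq_value.
  - apply eval_cRec with (F := fun x => x) (G := fun w => str_tail (pi2 (pi2 w)));
      intros; eval_steps.
  - generalize (pi1 z) (pi2 z). intros x n. induction n; simpl_rec; simpl; congruence.
Qed.
#[export] Hint Resolve eval_cIterStrTail : eval_progs.

Definition cStrBit := cComp cStrHead cIterStrTail.

Lemma eval_cStrBit A z : eval A cStrBit z (str_bit (pi1 z) (pi2 z)).
Proof. unfold cStrBit. eval_steps. Qed.
#[export] Hint Resolve eval_cStrBit : eval_progs.

(** [length s] counts the [j < str_num s] with [skipn j s <> []]. *)
Definition cStrLength :=
  cComp (cRec (cConst 0) (cComp cAdd (cPair cSndSnd (cComp cSgn (cComp cIterStrTail (cPair cPi1 cFstSnd))))))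
        (cPair cId cId).

Lemma eval_cStrLength A s : eval A cStrLength (str_num s) (length s).
Proof.
  set (G := fun w => pi2 (pi2 w) + min 1 (Nat.iter (pi1 (pi2 w)) str_tail (pi1 w))).
  assert (Hcount : forall m, rec_iter (fun _ => 0) G (str_num s) m = min m (length s)).
  { induction m; simpl_rec; [reflexivity|]. unfold G in *. simpl_pi.
    rewrite IHm, iter_str_tail.
    destruct (Nat.lt_ge_cases m (length s)).
    - destruct (skipn m s) as [|b t] eqn:E.
      + apply (f_equal (@length bool)) in E. rewrite length_skipn in E. simpl in E. lia.
      + cbn [str_num]. destruct b; lia.
    - rewrite skipn_all2 by lia. cbn [str_num]. lia. }
  unfold cStrLength. econstructor; [eval_steps|].
  eapply eval_eq_value.
  - apply eval_cRec_cpair with (F := fun _ => 0) (G := G); intros; [eval_steps|].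
    eapply eval_eq_value; eval_steps. now simpl_pi.
  - rewrite Hcount. pose proof (length_le_str_num s). lia.
Qed.
#[export] Hint Resolve eval_cStrLength : eval_progs.

Definition str_code (s : list bool) : nat := cpair (str_num s) (length s).

Definition pad (s : list bool) (k : nat) : list bool := s ++ repeat true k.

Lemma str_num_repeat_true k : str_num (repeat true k) = 2 ^ S k - 2.
Proof.
  induction k; simpl in *; [reflexivity|]. rewrite IHk.
  pose proof (Nat.pow_le_mono_r 2 0 k ltac:(lia) ltac:(lia)). simpl in *. lia.
Qed.

Definition cStrOnes := cComp cSub (cPair (cComp cPow2 cSucc) (cConst 2)).

Lemma eval_cStrOnes A k : eval A cStrOnes k (str_num (repeat true k)).
Proof. unfold cStrOnes. eapply eval_eq_value; [eval_steps|]. simpl_pi. now rewrite str_num_repeat_true. Qed.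
#[export] Hint Resolve eval_cStrOnes : eval_progs.

Definition cPad :=
  cPair (cComp cAdd (cPair cFstFst (cComp cMul (cPair (cComp cPow2 cSndFst) (cComp cStrOnes cPi2)))))
        (cComp cAdd (cPair cSndFst cPi2)).

Lemma eval_cPad A s k : eval A cPad (cpair (str_code s) k) (str_code (pad s k)).
Proof.
  unfold cPad.
  eapply eval_eq_value; [eval_steps|]. unfold str_code, pad. simpl_pi.
  now rewrite str_num_app, length_app, repeat_length.
Qed.
#[export] Hint Resolve eval_cPad : eval_progs.

Lemma eval_cStrLength_num_str A r : eval A cStrLength r (length (num_str r)).
Proof. rewrite <- (str_num_num_str r) at 1. apply eval_cStrLength. Qed.

Definition cAppendNum :=
  cPair (cComp cAdd (cPair cFstFst (cComp cMul (cPair (cComp cPow2 cSndFst) cPi2))))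
        (cComp cAdd (cPair cSndFst (cComp cStrLength cPi2))).

Lemma eval_cAppendNum A s r : eval A cAppendNum (cpair (str_code s) r) (str_code (s ++ num_str r)).
Proof.
  unfold cAppendNum.
  eapply eval_eq_value; [eval_steps; apply eval_cStrLength_num_str|].
  unfold str_code. simpl_pi. now rewrite str_num_app, length_app, str_num_num_str.
Qed.
#[export] Hint Resolve eval_cAppendNum : eval_progs.

Definition cSnocTrue :=
  cPair (cComp cAdd (cPair cPi1 (cComp cMul (cPair (cComp cPow2 cPi2) (cConst 2))))) (cComp cSucc cPi2).

Lemma eval_cSnocTrue A s : eval A cSnocTrue (str_code s) (str_code (s ++ [true])).
Proof.
  unfold cSnocTrue.
  eapply eval_eq_value; [eval_steps|]. unfold str_code. simpl_pi.
  rewrite str_num_app, length_app. simpl. f_equal; lia.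
Qed.
#[export] Hint Resolve eval_cSnocTrue : eval_progs.

(** * Clocked evaluation *)

(** With [h] giving clocked values as in [clocked] below, [min_search h n] scans
    [h 0, ..., h (n-1)] and returns [S (S y)] at the first [y] with [h y = 1] (value [0]),
    [1] if a divergent candidate comes first, and [0] if all converge to nonzero values. *)
Definition search_step (h : nat -> nat) (i r : nat) : nat :=
  match r with
  | 0 => match h i with 0 => 1 | 1 => S (S i) | _ => 0 end
  | _ => r
  end.

Fixpoint min_search (h : nat -> nat) (n : nat) : nat :=
  match n with 0 => 0 | S n => search_step h n (min_search h n) end.

(** [clocked c x t] is [S v] when [c] converges on [x] to [v] relative to the empty
    oracle with every unbounded search cut off after [t + 1] candidates, and [0]
    when this bounded run fails. *)
Fixpoint clocked (c : code) (x t : nat) : nat :=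
  match c with
  | cZero => 1
  | cSucc => S (S x)
  | cPi1 => S (pi1 x)
  | cPi2 => S (pi2 x)
  | cOracle => 1
  | cComp f g => match clocked g x t with 0 => 0 | S y => clocked f y t end
  | cPair f g =>
      match clocked f x t with
      | 0 => 0
      | S y => match clocked g x t with 0 => 0 | S z => S (cpair y z) end
      end
  | cRec f g =>
      nat_rect (fun _ => nat) (clocked f (pi1 x) t)
        (fun i r => match r with 0 => 0 | S y => clocked g (cpair (pi1 x) (cpair i y)) t end)
        (pi2 x)
  | cMin f => min_search (fun y => clocked f (cpair x y) t) (S t) - 1
  end.

Lemma min_search_0 h n : min_search h n = 0 -> forall k, k < n -> 2 <= h k.
Proof.
  induction n; simpl; intros H k hk; [lia|].
  destruct (min_search h n) eqn:E; [|discriminate].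
  unfold search_step in H. destruct (h n) as [|[|]] eqn:E2; try discriminate.
  assert (k < n \/ k = n) as [|] by lia; subst; auto. lia.
Qed.

Lemma min_search_all_nonzero h n : (forall k, k < n -> 2 <= h k) -> min_search h n = 0.
Proof.
  induction n; simpl; intros H; [reflexivity|]. rewrite IHn by auto.
  specialize (H n ltac:(lia)). unfold search_step. destruct (h n) as [|[|]]; auto; lia.
Qed.

Lemma min_search_found h n y :
  y < n -> (forall k, k < y -> 2 <= h k) -> h y = 1 -> min_search h n = S (S y).
Proof.
  induction n; simpl; intros hy hbelow hyes; [lia|].
  assert (y < n \/ y = n) as [|] by lia.
  - now rewrite IHn.
  - subst. rewrite min_search_all_nonzero by auto. unfold search_step. now rewrite hyes.
Qed.

Lemma min_search_found_inv h n y :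
  min_search h n = S (S y) -> h y = 1 /\ forall k, k < y -> 2 <= h k.
Proof.
  induction n; simpl; intros H; [discriminate|].
  destruct (min_search h n) eqn:E; [|auto].
  unfold search_step in H. destruct (h n) as [|[|]] eqn:E2; try discriminate.
  injection H as <-. split; [assumption|]. now apply min_search_0.
Qed.

Lemma clocked_sound c : forall x t v, clocked c x t = S v -> eval empty_set c x v.
Proof.
  induction c; intros x t v H; cbn [clocked] in H.
  - injection H as <-. constructor.
  - injection H as <-. constructor.
  - injection H as <-. apply eval_pi1.
  - injection H as <-. apply eval_pi2.
  - injection H as <-. constructor. auto.
  - destruct (clocked c2 x t) eqn:E; [discriminate|]. econstructor; eauto.
  - destruct (clocked c1 x t) eqn:E1; [discriminate|].
    destruct (clocked c2 x t) eqn:E2; [discriminate|]. injection H as <-. constructor; eauto.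
  - rewrite <- (cpair_pi x). revert v H. generalize (pi2 x). intros n.
    induction n; simpl; intros v H.
    + constructor. eauto.
    + destruct (nat_rect _ _ _ n) eqn:E; [discriminate|]. econstructor; eauto.
  - destruct (min_search _ (S t)) as [|[|y]] eqn:E; simpl in H; try discriminate.
    injection H as <-.
    apply min_search_found_inv in E as [hy hbelow].
    constructor; [eauto|]. intros k hk. specialize (hbelow k hk).
    destruct (clocked c (cpair x k) t) as [|[|w]] eqn:E; try lia. exists (S w); split; eauto.
Qed.

Lemma uniform_bound (P : nat -> nat -> Prop) y :
  (forall k T T', T <= T' -> P k T -> P k T') ->
  (forall k, k < y -> exists T, P k T) -> exists T, forall k, k < y -> P k T.
Proof.
  intros mono H. induction y.
  - exists 0; intros; lia.
  - destruct IHy as [T1 h1]; [intros; apply H; lia|].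
    destruct (H y ltac:(lia)) as [T2 h2].
    exists (max T1 T2). intros k hk. assert (k < y \/ k = y) as [|] by lia.
    + eapply mono; [|apply h1; auto]. lia.
    + subst. eapply mono; [|apply h2]. lia.
Qed.

Lemma clocked_complete c x v :
  eval empty_set c x v -> exists T, forall t, T <= t -> clocked c x t = S v.
Proof.
  revert c x v.
  apply (eval_ind_strong empty_set (fun c x v => exists T, forall t, T <= t -> clocked c x t = S v)).
  - exists 0; auto.
  - exists 0; auto.
  - exists 0; intros; simpl; now rewrite pi1_cpair.
  - exists 0; intros; simpl; now rewrite pi2_cpair.
  - intros x [].
  - exists 0; auto.
  - intros f g x y z _ [T1 h1] _ [T2 h2]. exists (max T1 T2). intros t ht. simpl.
    rewrite h1 by lia. apply h2; lia.
  - intros f g x y z _ [T1 h1] _ [T2 h2]. exists (max T1 T2). intros t ht. simpl.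
    now rewrite h1, h2 by lia.
  - intros f g x y _ [T1 h1]. exists T1. intros t ht. simpl. simpl_pi. simpl. auto.
  - intros f g x n y z _ [T1 h1] _ [T2 h2]. exists (max T1 T2). intros t ht.
    specialize (h1 t ltac:(lia)). simpl in *. simpl_pi. simpl. rewrite h1. apply h2; lia.
  - intros f x y _ [T0 h0] hk.
    destruct (uniform_bound
                (fun k T => exists v, v <> 0 /\ forall t, T <= t -> clocked f (cpair x k) t = S v) y)
      as [T1 h1].
    + intros k T T' hT [v [hv hh]]. exists v; split; auto. intros; apply hh; lia.
    + intros k hkk. destruct (hk k hkk) as [v [hv [_ [T hT]]]]. exists T, v; auto.
    + exists (max y (max T0 T1)). intros t ht. cbn [clocked].
      rewrite (min_search_found _ _ y); [lia|lia| |].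
      * intros k hkk. destruct (h1 k hkk) as [v [hv hh]]. rewrite hh by lia. lia.
      * apply h0; lia.
Qed.

Definition cMinStep (cf : code) :=
  cComp (cIfZero
           (cComp (cIfZero (cConst 1) (cIfZero (cComp cSucc (cComp cSucc cPi2)) (cConst 0)))
                  (cPair cId (cComp cf (cPair (cPair cFstFst cPi2) cSndFst))))
           (cComp cSucc cPi2))
        (cPair (cPair cPi1 cFstSnd) cSndSnd).

Fixpoint cClock (c : code) : code :=
  match c with
  | cZero => cConst 1
  | cSucc => cComp cSucc (cComp cSucc cPi1)
  | cPi1 => cComp cSucc cFstFst
  | cPi2 => cComp cSucc cSndFst
  | cOracle => cConst 1
  | cComp f g =>
      cComp (cIfZero (cConst 0) (cComp (cClock f) (cPair cPi2 cSndFst))) (cPair cId (cClock g))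
  | cPair f g =>
      cComp (cIfZero (cConst 0)
               (cComp (cIfZero (cConst 0) (cComp cSucc (cPair cSndFst cPi2)))
                      (cPair cId (cComp (cClock g) cPi1))))
            (cPair cId (cClock f))
  | cRec f g =>
      cComp (cRec (cClock f)
               (cComp (cIfZero (cConst 0)
                         (cComp (cClock g)
                                (cPair (cPair (cComp cPi1 cFstFst) (cPair (cComp cPi1 cSndFst) cPi2))
                                       (cComp cPi2 cFstFst))))
                      (cPair cId cSndSnd)))
            (cPair (cPair cFstFst cPi2) cSndFst)
  | cMin f => cComp cPred (cComp (cRec (cConst 0) (cMinStep (cClock f))) (cPair cId (cComp cSucc cPi2)))
  end.

Definition clock_spec A c := forall m, eval A (cClock c) m (clocked c (pi1 m) (pi2 m)).

Section ClockSpec.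

Variables (A : nat -> Prop) (f g : code).
Hypotheses (Hf : clock_spec A f) (Hg : clock_spec A g).

Lemma clock_spec_comp : clock_spec A (cComp f g).
Proof.
  intros m. cbn [cClock clocked]. econstructor; [eval_steps; apply Hg|].
  eapply eval_eq_value.
  - apply eval_cIfZero with (F := fun _ => 0) (G := fun w => clocked f (pi2 w) (pi2 (pi1 w)));
      intros; [eval_steps|].
    eapply eval_eq_value; [eval_steps; apply Hf|now simpl_pi].
  - simpl_pi. now destruct (clocked g (pi1 m) (pi2 m)); simpl_pi.
Qed.

Lemma clock_spec_pair : clock_spec A (cPair f g).
Proof.
  intros m. cbn [cClock clocked]. econstructor; [eval_steps; apply Hf|].
  eapply eval_eq_value.
  - apply eval_cIfZero with (F := fun _ => 0)
      (G := fun w => match clocked g (pi1 (pi1 w)) (pi2 (pi1 w)) with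
                     | 0 => 0 | S n => S (cpair (pi2 w) n) end); intros; [eval_steps|].
    econstructor; [eval_steps; apply Hg|].
    eapply eval_eq_value.
    + apply eval_cIfZero with (F := fun _ => 0) (G := fun w => S (cpair (pi2 (pi1 w)) (pi2 w)));
        intros; eval_steps.
    + simpl_pi. now destruct (clocked g _ _); simpl_pi.
  - simpl_pi. now destruct (clocked f (pi1 m) (pi2 m)); simpl_pi.
Qed.

Lemma clock_spec_rec : clock_spec A (cRec f g).
Proof.
  intros m. cbn [cClock clocked]. econstructor; [eval_steps|].
  eapply eval_eq_value.
  - apply eval_cRec with (F := fun P => clocked f (pi1 P) (pi2 P))
      (G := fun w => match pi2 (pi2 w) with
                     | 0 => 0
                     | S y => clocked g (cpair (pi1 (pi1 w)) (cpair (pi1 (pi2 w)) y)) (pi2 (pi1 w))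
                     end); [apply Hf|].
    intros z. econstructor; [eval_steps|].
    eapply eval_eq_value.
    + apply eval_cIfZero with (F := fun _ => 0)
        (G := fun u => clocked g (cpair (pi1 (pi1 (pi1 u))) (cpair (pi1 (pi2 (pi1 u))) (pi2 u)))
                         (pi2 (pi1 (pi1 u)))); intros; [eval_steps|].
      eapply eval_eq_value; [eval_steps; apply Hg|now simpl_pi].
    + simpl_pi. now destruct (pi2 (pi2 z)); simpl_pi.
  - simpl_pi. unfold rec_iter. generalize (pi2 (pi1 m)). intro n.
    induction n; simpl; simpl_pi; [reflexivity|]. now rewrite IHn.
Qed.

Lemma eval_cMinStep w :
  eval A (cMinStep (cClock f)) w
    (search_step (fun y => clocked f (cpair (pi1 (pi1 w)) y) (pi2 (pi1 w))) (pi1 (pi2 w)) (pi2 (pi2 w))).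
Proof.
  unfold cMinStep. econstructor; [eval_steps|].
  eapply eval_eq_value.
  - apply eval_cIfZero with
      (F := fun u => match clocked f (cpair (pi1 (pi1 u)) (pi2 u)) (pi2 (pi1 u)) with
                     | 0 => 1 | 1 => S (S (pi2 u)) | _ => 0 end)
      (G := fun w => S (pi2 w)); [intros u|intros v; eval_steps].
    econstructor; [eval_steps; apply Hf|].
    eapply eval_eq_value.
    + apply eval_cIfZero with (F := fun _ => 1)
        (G := fun w => match pi2 w with 0 => S (S (pi2 (pi1 w))) | S _ => 0 end);
        [intros; eval_steps|intros v].
      eapply eval_eq_value.
      * apply eval_cIfZero with (F := fun u => S (S (pi2 u))) (G := fun _ => 0); intros; eval_steps.
      * now destruct (pi2 v); simpl_pi.
    + simpl_pi. now destruct (clocked f _ _) as [|[|]]; simpl_pi.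
  - simpl_pi. unfold search_step. now destruct (pi2 (pi2 w)); simpl_pi.
Qed.

Lemma clock_spec_min : clock_spec A (cMin f).
Proof.
  intros m. cbn [cClock clocked]. econstructor; [econstructor; [eval_steps|]|].
  - apply eval_cRec with (F := fun _ => 0)
      (G := fun w => search_step (fun y => clocked f (cpair (pi1 (pi1 w)) y) (pi2 (pi1 w)))
                       (pi1 (pi2 w)) (pi2 (pi2 w))); intros; [eval_steps|apply eval_cMinStep].
  - eapply eval_eq_value; [apply eval_cPred|]. simpl_pi. rewrite <- Nat.sub_1_r. f_equal.
    unfold rec_iter. generalize (S (pi2 m)). intro n.
    induction n; simpl; simpl_pi; [reflexivity|]. now rewrite IHn.
Qed.

End ClockSpec.

Lemma eval_cClock A c : clock_spec A c.
Proof.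
  induction c; auto using clock_spec_comp, clock_spec_pair, clock_spec_rec, clock_spec_min;
    intros m; cbn [cClock clocked]; eval_steps.
Qed.

(** * Goedel numbers and the halting set *)

Lemma code_num_inj c d : code_num c = code_num d -> c = d.
Proof.
  revert d; induction c; intros [] h; simpl in h; inj_cpair; try discriminate; f_equal; auto.
Qed.

Lemma code_num_comp_inv c a b :
  code_num c = cpair 5 (cpair a b) -> exists f g, c = cComp f g /\ code_num f = a /\ code_num g = b.
Proof. destruct c; simpl; intros h; inj_cpair; try discriminate; eauto. Qed.

Lemma code_num_pair_inv c a b :
  code_num c = cpair 6 (cpair a b) -> exists f g, c = cPair f g /\ code_num f = a /\ code_num g = b.
Proof. destruct c; simpl; intros h; inj_cpair; try discriminate; eauto. Qed.

Lemma code_num_min_inv c a : code_num c = cpair 8 a -> exists f, c = cMin f /\ code_num f = a.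
Proof. destruct c; simpl; intros h; inj_cpair; try discriminate; eauto. Qed.

Definition cConstNum :=
  cRecOn (cConst (cpair 0 0)) (cPair (cConst 5) (cPair (cConst (cpair 1 0)) cSndSnd)).

Lemma eval_cConstNum A k : eval A cConstNum k (code_num (cConst k)).
Proof.
  eapply eval_eq_value.
  - apply eval_cRecOn with (F := fun _ => cpair 0 0)
      (G := fun w => cpair 5 (cpair (cpair 1 0) (pi2 (pi2 w)))); intros; eval_steps.
  - induction k; simpl_rec; simpl; congruence.
Qed.
#[export] Hint Resolve eval_cConstNum : eval_progs.

(** A program printing [code_num c]; [cConst (code_num c)] would be far too large. *)
Fixpoint cQuote (c : code) : code :=
  match c with
  | cZero => cConst (cpair 0 0)
  | cSucc => cConst (cpair 1 0)
  | cPi1 => cConst (cpair 2 0)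
  | cPi2 => cConst (cpair 3 0)
  | cOracle => cConst (cpair 4 0)
  | cComp f g => cPair (cConst 5) (cPair (cQuote f) (cQuote g))
  | cPair f g => cPair (cConst 6) (cPair (cQuote f) (cQuote g))
  | cRec f g => cPair (cConst 7) (cPair (cQuote f) (cQuote g))
  | cMin f => cPair (cConst 8) (cQuote f)
  end.

Lemma eval_cQuote A c x : eval A (cQuote c) x (code_num c).
Proof. induction c; simpl; eval_steps. Qed.

Lemma eval_comp_inv A f g x z : eval A (cComp f g) x z -> exists y, eval A g x y /\ eval A f y z.
Proof. intros h; inversion h; subst; eauto. Qed.

Lemma eval_pair_inv A f g x z :
  eval A (cPair f g) x z -> exists y w, z = cpair y w /\ eval A f x y /\ eval A g x w.
Proof. intros h; inversion h; subst; eauto. Qed.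

Lemma eval_min_inv A f x y :
  eval A (cMin f) x y ->
  eval A f (cpair x y) 0 /\ forall k, k < y -> exists v, v <> 0 /\ eval A f (cpair x k) v.
Proof. intros h; inversion h; subst; eauto. Qed.

Lemma eval_min_exists A f x :
  (forall y, exists v, eval A f (cpair x y) v) ->
  forall y0, eval A f (cpair x y0) 0 -> exists y, eval A (cMin f) x y.
Proof.
  intros tot y0. induction y0 as [y0 IH] using (well_founded_induction lt_wf). intros h0.
  destruct (classic (exists k, k < y0 /\ eval A f (cpair x k) 0)) as [[k [hk1 hk2]]|hn].
  - eapply IH; eauto.
  - exists y0. constructor; auto. intros k hk. destruct (tot k) as [v hv].
    exists v; split; auto. intros ->. eauto.
Qed.

Definition cLeCheck := cMin (cComp cSub cPi1).

Lemma cLeCheck_halts_le A p j v : eval A cLeCheck (cpair p j) v -> p <= j.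
Proof.
  intros h. apply eval_min_inv in h as [h _]. apply eval_comp_inv in h as [y [h1 h2]].
  apply (eval_functional _ _ _ _ (eval_pi1 A _)) in h1. subst.
  apply (eval_functional _ _ _ _ (eval_cSub A _)) in h2. simpl_pi. lia.
Qed.

Lemma eval_cLeCheck A p j : p <= j -> eval A cLeCheck (cpair p j) 0.
Proof.
  intros. constructor; [|intros; lia].
  eapply eval_eq_value; [eval_steps|]. simpl_pi. lia.
Qed.

(** [code_num cLeCheck] is a huge numeral; hiding it behind an opaque proof keeps
    unification from ever computing it. *)
Lemma le_check_num_exists : { n | n = code_num cLeCheck }.
Proof. exact (exist _ (code_num cLeCheck) eq_refl). Qed.

Definition le_check_num : nat := proj1_sig le_check_num_exists.

Lemma le_check_num_eq : le_check_num = code_num cLeCheck.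
Proof. exact (proj2_sig le_check_num_exists). Qed.

Definition run_code (E : code) (X : nat) : code := cComp (cMin E) (cConst X).
Definition run_num (e X : nat) : nat := cpair 5 (cpair (cpair 8 e) (code_num (cConst X))).

Definition bounded_run_code (E : code) (X j : nat) : code :=
  cComp cLeCheck (cPair (run_code E X) (cConst j)).
Definition bounded_run_num (e X j : nat) : nat :=
  cpair 5 (cpair le_check_num (cpair 6 (cpair (run_num e X) (code_num (cConst j))))).

Lemma code_num_bounded_run_code E X j :
  code_num (bounded_run_code E X j) = bounded_run_num (code_num E) X j.
Proof. unfold bounded_run_num. rewrite le_check_num_eq. reflexivity. Qed.

Lemma run_num_inv c e X :
  code_num c = run_num e X -> exists E, c = run_code E X /\ code_num E = e.
Proof.
  intros h. apply code_num_comp_inv in h as (f & g & -> & hf & hg).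
  apply code_num_min_inv in hf as (E & -> & hE). apply code_num_inj in hg as ->.
  now exists E.
Qed.

Lemma jump0_run_num e X :
  jump0 (run_num e X) <-> exists E, code_num E = e /\ exists p, eval empty_set (cMin E) X p.
Proof.
  split.
  - intros (c & hc & v & hv). apply run_num_inv in hc as (E & -> & hE).
    apply eval_comp_inv in hv as (y & h1 & h2). apply cConst_value in h1 as ->. eauto.
  - intros (E & <- & p & hp). exists (run_code E X). split; [reflexivity|].
    exists p. econstructor; [apply eval_cConst|exact hp].
Qed.

Lemma jump0_bounded_run_num e X j :
  jump0 (bounded_run_num e X j) <->
  exists E, code_num E = e /\ exists p, eval empty_set (cMin E) X p /\ p <= j.
Proof.
  split.
  - intros (c & hc & v & hv). unfold bounded_run_num in hc.
    apply code_num_comp_inv in hc as (f & g & -> & hf & hg).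
    rewrite le_check_num_eq in hf. apply code_num_inj in hf as ->.
    apply code_num_pair_inv in hg as (g1 & g2 & -> & hg1 & hg2).
    apply run_num_inv in hg1 as (E & -> & hE). apply code_num_inj in hg2 as ->.
    exists E. split; [exact hE|].
    apply eval_comp_inv in hv as (y & h1 & h2). apply eval_pair_inv in h1 as (p & w & -> & h3 & h4).
    apply cConst_value in h4 as ->. apply eval_comp_inv in h3 as (z & h5 & h6).
    apply cConst_value in h5 as ->. exists p. split; [exact h6|]. eapply cLeCheck_halts_le; eauto.
  - intros (E & <- & p & hp & hj). exists (bounded_run_code E X j).
    split; [apply code_num_bounded_run_code|].
    exists 0. econstructor; [econstructor; [econstructor; [apply eval_cConst|exact hp]|apply eval_cConst]|].
    now apply eval_cLeCheck.
Qed.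

(** * Oracle queries to [Z (+) K] *)

Definition indicator (P : Prop) : nat := if excluded_middle_informative P then 1 else 0.

Lemma indicator_true (P : Prop) : P -> indicator P = 1.
Proof. unfold indicator; destruct (excluded_middle_informative P); tauto. Qed.

Lemma indicator_false (P : Prop) : ~ P -> indicator P = 0.
Proof. unfold indicator; destruct (excluded_middle_informative P); tauto. Qed.

Lemma join_even Z K k : join Z K (2 * k) <-> Z k.
Proof.
  unfold join; split; [|eauto].
  intros [(k' & h1 & h2)|(k' & h1 & h2)]; [|lia]. now replace k with k' by lia.
Qed.

Lemma join_odd Z K k : join Z K (2 * k + 1) <-> K k.
Proof.
  unfold join; split; [|eauto].
  intros [(k' & h1 & h2)|(k' & h1 & h2)]; [lia|]. now replace k with k' by lia.
Qed.

Lemma eval_cOracle A x : eval A cOracle x (indicator (A x)).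
Proof. unfold indicator. destruct (excluded_middle_informative (A x)); now constructor. Qed.

Definition cQueryLeft := cComp cOracle (cComp cAdd (cPair cId cId)).

Lemma eval_cQueryLeft Z K i : eval (join Z K) cQueryLeft i (indicator (Z i)).
Proof.
  unfold cQueryLeft. eapply eval_eq_value; [eval_steps; apply eval_cOracle|]. simpl_pi.
  unfold indicator. replace (i + i) with (2 * i) by lia.
  do 2 destruct excluded_middle_informative; rewrite ?join_even in *; tauto.
Qed.

Definition cQueryRight := cComp cOracle (cComp cSucc (cComp cAdd (cPair cId cId))).

Lemma eval_cQueryRight Z K i : eval (join Z K) cQueryRight i (indicator (K i)).
Proof.
  unfold cQueryRight. eapply eval_eq_value; [eval_steps; apply eval_cOracle|]. simpl_pi.
  unfold indicator. replace (S (i + i)) with (2 * i + 1) by lia.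
  do 2 destruct excluded_middle_informative; rewrite ?join_odd in *; tauto.
Qed.
#[export] Hint Resolve eval_cQueryLeft eval_cQueryRight : eval_progs.

(** * Searching for an extension in a c.e. set of strings *)

(** On [<str_code s, <u, t>>], returns [0] iff [c] halts on [str_num (s ++ num_str u)]
    within clock [t]. *)
Definition cExtSearch (c : code) :=
  cComp cNot (cComp cSgn (cComp (cClock c)
    (cPair (cComp cAdd (cPair cFstFst (cComp cMul (cPair (cComp cPow2 cSndFst) cFstSnd)))) cSndSnd))).

Lemma eval_cExtSearch A c z :
  eval A (cExtSearch c) z
    (1 - min 1 (clocked c (pi1 (pi1 z) + 2 ^ pi2 (pi1 z) * pi1 (pi2 z)) (pi2 (pi2 z)))).
Proof.
  unfold cExtSearch. eapply eval_eq_value; [eval_steps; apply eval_cClock|]. now simpl_pi.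
Qed.

Lemma ext_search_witness c s p :
  eval empty_set (cMin (cExtSearch c)) (str_code s) p ->
  exists v, eval empty_set c (str_num (s ++ num_str (pi1 p))) v.
Proof.
  intros h. apply eval_min_inv in h as [h _].
  apply (eval_functional _ _ _ _ (eval_cExtSearch _ _ _)) in h. unfold str_code in h. simpl_pi.
  destruct (clocked c _ _) as [|v] eqn:E; [discriminate|].
  exists v. apply clocked_sound in E. now rewrite str_num_app, str_num_num_str.
Qed.

Lemma ext_search_halts_iff c s :
  (exists p, eval empty_set (cMin (cExtSearch c)) (str_code s) p) <->
  exists u v, eval empty_set c (str_num (s ++ u)) v.
Proof.
  split.
  - intros [p hp]. apply ext_search_witness in hp. eauto.
  - intros (u & v & hv). apply clocked_complete in hv as [T hT].
    apply eval_min_exists with (y0 := cpair (str_num u) T).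
    + eexists; apply eval_cExtSearch.
    + eapply eval_eq_value; [apply eval_cExtSearch|]. unfold str_code. simpl_pi.
      rewrite <- str_num_app, hT; auto.
Qed.

(** * The construction *)

Definition ext_halts (e : nat) (s : list bool) (k : nat) : Prop :=
  jump0 (run_num e (str_code (pad s k))).

Definition ext_witness (e : nat) (s : list bool) (k : nat) : nat :=
  epsilon (inhabits 0)
    (fun p => exists E, code_num E = e /\ eval empty_set (cMin E) (str_code (pad s k)) p).

Definition ext_string (e : nat) (s : list bool) (k : nat) : list bool :=
  pad s k ++ num_str (pi1 (ext_witness e s k)).

(** The string [num_str r], placed at position [n], has a [1] wherever [Z] has an element
    (bits past its end read as [1], see [str_bit_str_num]). *)
Definition covers_from (Z : nat -> Prop) (n r : nat) : Prop :=
  forall j, j < r -> Z (n + j) -> str_bit r j = 1.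

Definition settles (Z : nat -> Prop) (e : nat) (s : list bool) (k : nat) : Prop :=
  ~ ext_halts e s k \/ (ext_halts e s k /\ covers_from Z (length s + k) (pi1 (ext_witness e s k))).

Definition least_settling (Z : nat -> Prop) (e : nat) (s : list bool) : nat :=
  epsilon (inhabits 0) (fun k => settles Z e s k /\ forall k', k' < k -> ~ settles Z e s k').

(** The trailing [true] makes every stage strictly longer than the previous one. *)
Definition stage_step (Z : nat -> Prop) (e : nat) (s : list bool) : list bool :=
  let k := least_settling Z e s in
  (if excluded_middle_informative (ext_halts e s k) then ext_string e s k else pad s k) ++ [true].

Fixpoint stage (Z : nat -> Prop) (e : nat) : list bool :=
  match e with 0 => [] | S e => stage_step Z e (stage Z e) end.

Definition generic_set (Z : nat -> Prop) (n : nat) : Prop := nth n (stage Z (S n)) false = true.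

Lemma ext_witness_spec e s k :
  ext_halts e s k ->
  exists E, code_num E = e /\ eval empty_set (cMin E) (str_code (pad s k)) (ext_witness e s k).
Proof.
  intros h. apply jump0_run_num in h as (E & hE & p & hp).
  unfold ext_witness. apply epsilon_spec. eauto.
Qed.

Lemma eval_ext_witness e s k E :
  code_num E = e -> ext_halts e s k ->
  eval empty_set (cMin E) (str_code (pad s k)) (ext_witness e s k).
Proof.
  intros hE h. destruct (ext_witness_spec _ _ _ h) as (E' & hE' & hw).
  rewrite <- hE in hE'. now apply code_num_inj in hE' as ->.
Qed.

Lemma exists_least (P : nat -> Prop) n : P n -> exists k, P k /\ forall k', k' < k -> ~ P k'.
Proof.
  induction n as [n IH] using (well_founded_induction lt_wf). intros h.
  destruct (classic (exists k, k < n /\ P k)) as [(k & hk & pk)|hn].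
  - eapply IH; eauto.
  - exists n; split; [exact h|]. intros k' hk' pk'. eauto.
Qed.

Lemma least_settling_spec Z e s :
  (exists k, settles Z e s k) ->
  settles Z e s (least_settling Z e s) /\
  forall k', k' < least_settling Z e s -> ~ settles Z e s k'.
Proof. intros [k hk]. unfold least_settling. apply epsilon_spec. now apply (exists_least _ k). Qed.

(** * Hyperimmunity forces settling *)

(** If no [k] settles, the searches from [pad s k] all halt; starting each search just past
    the extension found by the previous one gives a computable sequence of blocks. *)
Fixpoint block_start (e : nat) (s : list bool) (i : nat) : nat :=
  match i with
  | 0 => 0
  | S i => block_start e s i + 1 + pi1 (ext_witness e s (block_start e s i))
  end.

Definition cNextBlock (E : code) (R : nat) :=
  cComp cAdd (cPair (cComp cSucc cSndSnd) (cComp cPi1 (cComp (cMin E) (cComp cPad (cPair (cConst R) cSndSnd))))).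

Lemma computable_block_start e s E :
  code_num E = e -> (forall k, ext_halts e s k) ->
  computable_fun (fun i => length s + block_start e s i).
Proof.
  intros hE hall.
  exists (cComp cAdd (cPair (cConst (length s)) (cRecOn cZero (cNextBlock E (str_code s))))).
  intros i. eapply eval_eq_value.
  - eval_steps.
    apply eval_cRecOn with (F := fun _ => 0)
      (G := fun w => S (pi2 (pi2 w)) + pi1 (ext_witness e s (pi2 (pi2 w)))); intros; [eval_steps|].
    unfold cNextBlock. eapply eval_eq_value; [eval_steps; apply (eval_ext_witness e); auto|now simpl_pi].
  - simpl_pi. f_equal. induction i; simpl_rec; cbn [block_start]; [reflexivity|]. rewrite IHi. lia.
Qed.

Lemma exists_settling Z e s : hyperimmune Z -> exists k, settles Z e s k.
Proof.
  intros [_ HZ]. apply NNPP. intros hn.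
  assert (hall : forall k, ext_halts e s k)
    by (intros k; apply NNPP; intros h; apply hn; exists k; now left).
  destruct (ext_witness_spec _ _ _ (hall 0)) as (E & hE & _).
  destruct (HZ _ (computable_block_start e s E hE hall)) as [i hi]; [intros i; simpl; lia|].
  apply hn. exists (block_start e s i). right. split; [apply hall|].
  intros j hj hz. exfalso. apply (hi (length s + block_start e s i + j)); [lia| |exact hz].
  simpl. lia.
Qed.

(** * The stages cover [Z] and force every requirement *)

Definition covers (Z : nat -> Prop) (s : list bool) : Prop :=
  forall i, i < length s -> Z i -> nth i s false = true.

Lemma covers_app Z s t :
  covers Z s -> (forall j, j < length t -> Z (length s + j) -> nth j t false = true) ->
  covers Z (s ++ t).
Proof.
  intros hs ht i hi hz. rewrite length_app in hi.
  destruct (Nat.lt_ge_cases i (length s)).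
  - rewrite app_nth1 by auto. auto.
  - rewrite app_nth2 by auto. apply ht; [lia|]. now replace (length s + (i - length s)) with i by lia.
Qed.

Lemma covers_pad Z s k : covers Z s -> covers Z (pad s k).
Proof.
  intros h. apply covers_app; [exact h|]. intros j hj _.
  rewrite repeat_length in hj. now rewrite nth_repeat_lt.
Qed.

Lemma covers_snoc_true Z s : covers Z s -> covers Z (s ++ [true]).
Proof. intros h. apply covers_app; [exact h|]. intros [|j] hj; simpl in *; [auto|lia]. Qed.

Lemma covers_ext_string Z e s k :
  covers Z s -> covers_from Z (length s + k) (pi1 (ext_witness e s k)) ->
  covers Z (ext_string e s k).
Proof.
  intros hs hc. apply covers_app; [now apply covers_pad|].
  set (r := pi1 (ext_witness e s k)) in *. intros j hj hz.
  unfold pad in hz. rewrite length_app, repeat_length in hz.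
  pose proof (length_le_str_num (num_str r)). rewrite str_num_num_str in *.
  specialize (hc j ltac:(lia) hz). rewrite <- (str_num_num_str r), str_bit_str_num in hc.
  rewrite (nth_indep _ false true hj). now destruct (nth j (num_str r) true).
Qed.

Lemma extends_trans a b c : extends b a -> extends c b -> extends c a.
Proof. intros [r1 ->] [r2 ->]. exists (r1 ++ r2). now rewrite app_assoc. Qed.

Lemma nth_extends s t i : extends t s -> i < length s -> nth i t false = nth i s false.
Proof. intros [r ->] h. now apply app_nth1. Qed.

Section Stages.

Variable Z : nat -> Prop.
Hypothesis HZ : hyperimmune Z.

Lemma stage_step_spec e s :
  covers Z s -> covers Z (stage_step Z e s) /\ extends (stage_step Z e s) s /\
  length s < length (stage_step Z e s).
Proof.
  intros hs. destruct (least_settling_spec Z e s (exists_settling Z e s HZ)) as [hst _].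
  unfold stage_step. set (k := least_settling Z e s) in *.
  destruct (excluded_middle_informative (ext_halts e s k)) as [hy|hy];
    (split; [apply covers_snoc_true|split]).
  - destruct hst as [|[_ h]]; [contradiction|]. now apply covers_ext_string.
  - exists ((repeat true k ++ num_str (pi1 (ext_witness e s k))) ++ [true]).
    unfold ext_string, pad. now rewrite !app_assoc.
  - unfold ext_string, pad. rewrite !length_app. simpl. lia.
  - now apply covers_pad.
  - exists (repeat true k ++ [true]). unfold pad. now rewrite !app_assoc.
  - unfold pad. rewrite !length_app. simpl. lia.
Qed.

Lemma stage_spec e : covers Z (stage Z e) /\ e <= length (stage Z e).
Proof.
  induction e as [|e [h1 h2]]; simpl.
  - split; [intros i hi; simpl in hi; lia|lia].
  - destruct (stage_step_spec e (stage Z e) h1) as (? & _ & ?). split; [auto|lia].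
Qed.

Lemma stage_extends a b : a <= b -> extends (stage Z b) (stage Z a).
Proof.
  induction 1 as [|b _ [r IH]]; [exists []; now rewrite app_nil_r|].
  destruct (stage_step_spec b (stage Z b) (proj1 (stage_spec b))) as (_ & [r' hr'] & _).
  exists (r ++ r'). cbn [stage]. now rewrite hr', IH, app_assoc.
Qed.

Lemma init_seg_stage s e : extends (stage Z e) s -> init_seg (generic_set Z) s.
Proof.
  intros hp i hi. unfold generic_set.
  destruct (stage_spec (S i)) as [_ hlen].
  pose proof (stage_extends e (max e (S i)) ltac:(lia)) as h1.
  pose proof (stage_extends (S i) (max e (S i)) ltac:(lia)) as h2.
  pose proof (extends_trans _ _ _ hp h1) as hs.
  rewrite <- (nth_extends _ _ _ hs hi), <- (nth_extends _ _ i h2 ltac:(lia)). tauto.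
Qed.

Lemma generic_set_covers n : Z n -> generic_set Z n.
Proof. intros hz. destruct (stage_spec (S n)) as [h1 h2]. apply h1; [lia|exact hz]. Qed.

Lemma stage_step_halts e s :
  ext_halts e s (least_settling Z e s) ->
  stage_step Z e s = ext_string e s (least_settling Z e s) ++ [true].
Proof. intros h. unfold stage_step. destruct excluded_middle_informative; [reflexivity|contradiction]. Qed.

Lemma stage_step_diverges e s :
  ~ ext_halts e s (least_settling Z e s) ->
  stage_step Z e s = pad s (least_settling Z e s) ++ [true].
Proof. intros h. unfold stage_step. destruct excluded_middle_informative; [contradiction|reflexivity]. Qed.

(** At the stage indexed by the extension search for [S], the chosen [k] either yields an
    extension in [S] or shows that [pad s k] has none. *)
Lemma generic_set_one_generic : one_generic (generic_set Z).
Proof.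
  intros SS [c hc]. remember (code_num (cExtSearch c)) as e eqn:He.
  set (s := stage Z e). set (k := least_settling Z e s).
  destruct (classic (ext_halts e s k)) as [hy|hy].
  - left. exists (ext_string e s k). split.
    + apply (init_seg_stage _ (S e)). exists [true]. exact (stage_step_halts e s hy).
    + apply hc. pose proof (eval_ext_witness e s k (cExtSearch c) (eq_sym He) hy) as hw.
      now apply ext_search_witness in hw.
  - right. exists (pad s k). split.
    + apply (init_seg_stage _ (S e)). exists [true]. exact (stage_step_diverges e s hy).
    + intros t ht [u ->]. apply hc in ht. apply hy, jump0_run_num.
      exists (cExtSearch c). split; [now symmetry|]. apply ext_search_halts_iff. eauto.
Qed.

End Stages.

(** * The construction is computable in [Z (+) 0'] *)

Definition cRunNum := cPair (cConst 5) (cPair (cPair (cConst 8) cPi1) (cComp cConstNum cPi2)).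

Lemma eval_cRunNum A z : eval A cRunNum z (run_num (pi1 z) (pi2 z)).
Proof. unfold cRunNum. eval_steps. Qed.
#[export] Hint Resolve eval_cRunNum : eval_progs.

Definition cLeCheckNum := cQuote cLeCheck.

Lemma eval_cLeCheckNum A x : eval A cLeCheckNum x le_check_num.
Proof. rewrite le_check_num_eq. apply eval_cQuote. Qed.
#[export] Hint Resolve eval_cLeCheckNum : eval_progs.

Definition cBoundedRunNum :=
  cPair (cConst 5) (cPair cLeCheckNum
    (cPair (cConst 6) (cPair (cComp cRunNum cPi1) (cComp cConstNum cPi2)))).

Lemma eval_cBoundedRunNum A z :
  eval A cBoundedRunNum z (bounded_run_num (pi1 (pi1 z)) (pi2 (pi1 z)) (pi2 z)).
Proof. unfold cBoundedRunNum. eapply eval_eq_value; [eval_steps|reflexivity]. Qed.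

Definition cRunHalts := cComp cQueryRight cRunNum.

Lemma eval_cRunHalts Z e X : eval (join Z jump0) cRunHalts (cpair e X) (indicator (jump0 (run_num e X))).
Proof. eapply eval_eq_value; [unfold cRunHalts; eval_steps|now simpl_pi]. Qed.
#[export] Hint Resolve eval_cRunHalts : eval_progs.

(** Searches for the least bound [j] on the value of [cMin E] on [X]: that is its value. *)
Definition cRunValue := cMin (cComp cNot (cComp cQueryRight cBoundedRunNum)).

Lemma eval_cRunValue Z e X E p :
  code_num E = e -> eval empty_set (cMin E) X p -> eval (join Z jump0) cRunValue (cpair e X) p.
Proof.
  intros hE hp. constructor.
  - econstructor; [econstructor; [apply eval_cBoundedRunNum|apply eval_cQueryRight]|].
    eapply eval_eq_value; [apply eval_cNot|]. simpl_pi. rewrite indicator_true; [reflexivity|].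
    apply jump0_bounded_run_num. eauto.
  - intros k hk. exists 1. split; [lia|].
    econstructor; [econstructor; [apply eval_cBoundedRunNum|apply eval_cQueryRight]|].
    eapply eval_eq_value; [apply eval_cNot|]. simpl_pi. rewrite indicator_false; [reflexivity|].
    intros h. apply jump0_bounded_run_num in h as (E' & hE' & p' & hp' & hle). rewrite <- hE in hE'. apply code_num_inj in hE' as ->.
    apply (eval_functional _ _ _ _ hp) in hp'. lia.
Qed.

Lemma str_bit_le_1 n j : str_bit n j <= 1.
Proof. unfold str_bit, str_head. lia. Qed.

Lemma indicator_covers_succ Z L r m :
  indicator (forall j, j < S m -> Z (L + j) -> str_bit r j = 1) =
  indicator (forall j, j < m -> Z (L + j) -> str_bit r j = 1) *
  (1 - indicator (Z (L + m)) * (1 - str_bit r m)).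
Proof.
  pose proof (str_bit_le_1 r m).
  destruct (classic (forall j, j < m -> Z (L + j) -> str_bit r j = 1)) as [h|h].
  - rewrite (indicator_true _ h).
    destruct (classic (Z (L + m) -> str_bit r m = 1)) as [hm|hm].
    + rewrite indicator_true.
      * destruct (classic (Z (L + m))) as [hz|hz];
          [rewrite indicator_true, hm by exact hz|rewrite indicator_false by exact hz]; lia.
      * intros j hj. assert (j < m \/ j = m) as [|] by lia; [now apply h|now subst].
    + rewrite indicator_false by (intros h'; apply hm, h'; lia).
      assert (hz : Z (L + m)) by (apply NNPP; tauto).
      rewrite indicator_true by exact hz. assert (str_bit r m = 0) by (destruct (str_bit r m); tauto || lia).
      lia.
  - rewrite (indicator_false _ h), indicator_false; [lia|].
    intros h'. apply h. intros j hj. apply h'. lia.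
Qed.

Definition cCovers :=
  cComp (cRec (cConst 1)
     (cComp cMul (cPair cSndSnd (cComp cNot (cComp cMul
        (cPair (cComp cQueryLeft (cComp cAdd (cPair cFstFst cFstSnd)))
               (cComp cNot (cComp cStrBit (cPair cSndFst cFstSnd)))))))))
    (cPair cId cPi2).

Lemma eval_cCovers Z K L r : eval (join Z K) cCovers (cpair L r) (indicator (covers_from Z L r)).
Proof.
  set (G := fun z => pi2 (pi2 z) *
              (1 - indicator (Z (pi1 (pi1 z) + pi1 (pi2 z))) * (1 - str_bit (pi2 (pi1 z)) (pi1 (pi2 z))))).
  unfold cCovers. econstructor; [eval_steps|].
  eapply eval_eq_value.
  - apply eval_cRec with (F := fun _ => 1) (G := G); intros; [eval_steps|].
    eapply eval_eq_value; [eval_steps|now simpl_pi].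
  - simpl_pi. unfold covers_from. generalize r at 2 3. intros m.
    induction m; simpl_rec.
    + rewrite indicator_true; [reflexivity|]. intros; lia.
    + unfold G at 1. simpl_pi. now rewrite IHm, indicator_covers_succ.
Qed.

Definition cPadArg := cPair cFstFst (cComp cPad (cPair cSndFst cPi2)).

Lemma eval_cPadArg A e s k :
  eval A cPadArg (cpair (cpair e (str_code s)) k) (cpair e (str_code (pad s k))).
Proof.
  unfold cPadArg. eapply eval_eq_value; [eval_steps; simpl_pi; apply eval_cPad|now simpl_pi].
Qed.
#[export] Hint Resolve eval_cPadArg : eval_progs.

Definition cUnsettled :=
  cComp (cIfZero (cConst 0)
           (cComp cNot (cComp cCovers (cPair (cComp cPi2 cSndFst) (cComp cPi1 (cComp cRunValue cPi1))))))
        (cPair cPadArg (cComp cRunHalts cPadArg)).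

Lemma eval_cUnsettled Z e s k :
  eval (join Z jump0) cUnsettled (cpair (cpair e (str_code s)) k) (1 - indicator (settles Z e s k)).
Proof.
  unfold cUnsettled. destruct (classic (ext_halts e s k)) as [hy|hy].
  - apply e_comp with (y := cpair (cpair e (str_code (pad s k))) 1).
    + eapply eval_eq_value; [eval_steps|]. simpl_pi.
      now rewrite indicator_true.
    + apply eval_cIfZero_1 with (y := 0); [apply eval_cConst|].
      destruct (ext_witness_spec _ _ _ hy) as (E & hE & hw).
      eapply eval_eq_value.
      * eapply e_comp; [eapply e_comp; [eapply e_pair|apply eval_cCovers]|apply eval_cNot]; [eval_steps|].
        eapply e_comp; [eapply e_comp; [apply eval_pi1|]|apply eval_pi1].
        simpl_pi. eapply eval_cRunValue; eauto.
      * unfold str_code, pad. simpl_pi. rewrite length_app, repeat_length. f_equal.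
        unfold settles. destruct (classic (covers_from Z (length s + k) (pi1 (ext_witness e s k)))).
        -- rewrite !indicator_true; tauto.
        -- rewrite !indicator_false; tauto.
  - apply e_comp with (y := cpair (cpair e (str_code (pad s k))) 0).
    + eapply eval_eq_value; [eval_steps|]. simpl_pi.
      now rewrite indicator_false.
    + eapply eval_eq_value; [apply eval_cIfZero_0, eval_cConst|].
      rewrite indicator_true; [reflexivity|now left].
Qed.

Definition cLeastSettling := cMin cUnsettled.

Lemma eval_cLeastSettling Z e s :
  hyperimmune Z ->
  eval (join Z jump0) cLeastSettling (cpair e (str_code s)) (least_settling Z e s).
Proof.
  intros HZ. destruct (least_settling_spec Z e s (exists_settling Z e s HZ)) as [hs hbelow].
  constructor.
  - eapply eval_eq_value; [apply eval_cUnsettled|]. now rewrite indicator_true.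
  - intros k hk. exists 1. split; [lia|].
    eapply eval_eq_value; [apply eval_cUnsettled|]. rewrite indicator_false; auto.
Qed.
#[export] Hint Resolve eval_cLeastSettling : eval_progs.

Definition cPadLeast := cPair cPi1 (cComp cPad (cPair cPi2 cLeastSettling)).

Definition cStageStep :=
  cComp (cIfZero (cComp cSnocTrue cPi2)
                 (cComp cSnocTrue (cComp cAppendNum (cPair cSndFst (cComp cPi1 (cComp cRunValue cPi1))))))
        (cPair cPadLeast (cComp cRunHalts cPadLeast)).

Lemma eval_cStageStep Z e s :
  hyperimmune Z ->
  eval (join Z jump0) cStageStep (cpair e (str_code s)) (str_code (stage_step Z e s)).
Proof.
  intros HZ. set (k := least_settling Z e s).
  assert (hpad : eval (join Z jump0) cPadLeast (cpair e (str_code s)) (cpair e (str_code (pad s k)))).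
  { unfold cPadLeast. eapply eval_eq_value.
    - eapply e_pair; [apply eval_pi1|].
      eapply e_comp; [eapply e_pair; [apply eval_pi2|apply (eval_cLeastSettling Z e s HZ)]|].
      rewrite pi2_cpair. apply eval_cPad.
    - now simpl_pi. }
  unfold cStageStep. destruct (classic (ext_halts e s k)) as [hy|hy].
  - rewrite stage_step_halts by exact hy.
    apply e_comp with (y := cpair (cpair e (str_code (pad s k))) 1).
    + eapply eval_eq_value; [eval_steps; apply hpad|]. simpl_pi. now rewrite indicator_true.
    + eapply eval_cIfZero_1.
      { eapply e_comp; [apply eval_pi2|]. rewrite pi2_cpair. apply eval_cSnocTrue. }
      destruct (ext_witness_spec _ _ _ hy) as (E & hE & hw).
      eapply e_comp; [eapply e_comp; [eapply e_pair|]|].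
      * apply eval_cSndFst.
      * eapply e_comp; [eapply e_comp; [apply eval_pi1|]|apply eval_pi1].
        simpl_pi. eapply eval_cRunValue; eauto.
      * simpl_pi. apply eval_cAppendNum.
      * apply eval_cSnocTrue.
  - rewrite stage_step_diverges by exact hy.
    apply e_comp with (y := cpair (cpair e (str_code (pad s k))) 0).
    + eapply eval_eq_value; [eval_steps; apply hpad|]. simpl_pi. now rewrite indicator_false.
    + apply eval_cIfZero_0. eapply e_comp; [apply eval_pi2|]. rewrite pi2_cpair. apply eval_cSnocTrue.
Qed.
#[export] Hint Resolve eval_cStageStep : eval_progs.

Definition cStage := cComp (cRecOn (cConst (str_code [])) (cComp cStageStep (cPair cFstSnd cSndSnd))) cSucc.

Lemma eval_cStage Z n : hyperimmune Z -> eval (join Z jump0) cStage n (str_code (stage Z (S n))).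
Proof.
  intros HZ. unfold cStage, cRecOn. econstructor; [apply e_succ|].
  econstructor; [eval_steps|]. generalize (S n). intros m.
  induction m; econstructor; [apply eval_cConst|exact IHm|].
  eapply e_comp; [eval_steps|]. simpl_pi. now apply eval_cStageStep.
Qed.

Definition cGeneric := cComp cStrBit (cPair (cComp cPi1 cStage) cId).

Lemma eval_cGeneric Z n : hyperimmune Z -> eval (join Z jump0) cGeneric n (indicator (generic_set Z n)).
Proof.
  intros HZ. unfold cGeneric. eapply eval_eq_value.
  - eapply e_comp; [eapply e_pair; [eapply e_comp; [now apply eval_cStage|apply eval_pi1]|apply eval_cId]|].
    apply eval_cStrBit.
  - unfold str_code. simpl_pi. rewrite str_bit_str_num.
    destruct (stage_spec Z HZ (S n)) as [_ hlen]. unfold generic_set.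
    rewrite (nth_indep _ true false) by lia.
    destruct (nth n (stage Z (S n)) false); [rewrite indicator_true|rewrite indicator_false]; auto.
Qed.

Theorem proposition4p7 (Z : nat -> Prop) (HZ : hyperimmune Z) :
  exists G : nat -> Prop,
    one_generic G /\ turing_le G (join Z jump0) /\ (forall n, Z n -> G n).
Proof.
  exists (generic_set Z). split; [|split].
  - exact (generic_set_one_generic Z HZ).
  - exists cGeneric. intros n.
    split; intros h; eapply eval_eq_value; try exact (eval_cGeneric Z n HZ).
    + now apply indicator_true.
    + now apply indicator_false.
  - exact (generic_set_covers Z HZ).
Qed.
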